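(* Let $n\ge1$ and $0<\epsilon\le 1$. Every symmetric pseudo-Boolean function $f:\{0,1\}^n\to\mathbb{R}$, with $f(x)=k_{|x|}$, can be represented uniquely in the form \[ f(x)=\sum_{i=0}^{n}\alpha_i\,\min\Bigl(0,\; i-\epsilon-\sum_{r=1}^n x_r\Bigr)\quad\text{for all }x\in\{0,1\}^n, \] and the coefficients are, for $j=0,1,\ldots,n$, \[ \alpha_j=-\sum_{i=0}^{j-2}\frac{(\epsilon-1)^{j-i-2}}{\epsilon^{j-i+1}}\,k_i+\Bigl(\frac1\epsilon+\frac1{\epsilon^2}\Bigr)k_{j-1}-\frac1\epsilon k_j, \] where the first sum is $0$ when $j<2$ and $k_{-1}:=0$.
   Context: A pseudo-Boolean function is a map $\{0,1\}^n\to\mathbb{R}$; it is symmetric if there are reals $k_0,\ldots,k_n$ with $f(x)=k_l$ whenever the Hamming weight $|x|=\sum_j x_j$ equals $l$. The expression $(\epsilon-1)^0$ is interpreted as $1$ (also when $\epsilon=1$). *)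

From HB Require Import structures.
From mathcomp Require Import all_boot all_order all_algebra.
Set Implicit Arguments. Unset Strict Implicit. Unset Printing Implicit Defensive.
Import Order.TTheory GRing.Theory Num.Theory.
Local Open Scope ring_scope.

Definition hweight (n : nat) (x : {ffun 'I_n -> bool}) : nat :=
  (\sum_(r < n) (x r : nat))%N.

Definition kprev (R : pzRingType) (k : nat -> R) (j : nat) : R :=
  if j is j'.+1 then k j' else 0.

Definition alpha_coef (R : fieldType) (eps : R) (k : nat -> R) (j : nat) : R :=
  - (\sum_(0 <= i < j.-1) ((eps - 1) ^+ (j - i - 2)%N / eps ^+ (j - i + 1)%N) * k i)
  + (1 / eps + 1 / eps ^+ 2) * kprev k j - (1 / eps) * k j.

Definition represents (R : realFieldType) (n : nat) (eps : R)
    (f : {ffun 'I_n -> bool} -> R) (alpha : {ffun 'I_n.+1 -> R}) : Prop :=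
  forall x : {ffun 'I_n -> bool},
    f x = \sum_(i < n.+1) alpha i * Num.min 0 ((i : nat)%:R - eps - (hweight x)%:R).

From HB Require Import structures.
From mathcomp Require Import all_boot all_order all_algebra.
From mathcomp Require Import ring lra zify.
Import Order.TTheory GRing.Theory Num.Theory.
Local Open Scope ring_scope.

(* Because 0 <= eps <= 1, the hinge min(0, i - eps - l) vanishes for i > l and
   is linear for i <= l, so on inputs of weight l the representation is the
   lower triangular sum hinge_sum eps alpha l.  The triangular system
   hinge_sum eps alpha l = k_l (l = 0..n) has diagonal -eps != 0, hence a
   unique solution; taking second differences of the system gives the
   recurrence eps alpha_{l+1} = (eps - 1) alpha_l - k_{l+1} + 2 k_l - k_{l-1},
   which is solved by the closed form alpha_coef. *)

Definition hinge_sum (R : pzRingType) (eps : R) (a : nat -> R) (l : nat) : R :=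
  \sum_(i < l.+1) a i * ((i : nat)%:R - eps - l%:R).
Arguments hinge_sum {R}.

Lemma hinge_sumS (R : comPzRingType) (eps : R) (a : nat -> R) (l : nat) :
  hinge_sum eps a l.+1 = hinge_sum eps a l - \sum_(i < l.+1) a i - eps * a l.+1.
Proof.
rewrite /hinge_sum big_ord_recr /=.
have -> : \sum_(i < l.+1) a i * ((i : nat)%:R - eps - l.+1%:R)
    = \sum_(i < l.+1) (a i * ((i : nat)%:R - eps - l%:R) - a i).
  by apply: eq_bigr => i _; rewrite -natr1; ring.
by rewrite sumrB; ring.
Qed.

Section ClosedForm.

Variables (R : fieldType) (eps : R) (k : nat -> R).
Hypothesis eps_neq0 : eps != 0.

Local Notation alpha := (alpha_coef eps k).

Lemma alpha_coefS (l : nat) :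
  eps * alpha l.+1 = (eps - 1) * alpha l - k l.+1 + 2 * k l - kprev k l.
Proof.
case: l => [|l]; first by rewrite /alpha_coef /= !big_geq //; field.
rewrite /alpha_coef /= big_nat_recr //=.
have -> : \sum_(0 <= i < l) ((eps - 1) ^+ (l.+2 - i - 2) / eps ^+ (l.+2 - i + 1) * k i)
    = (eps - 1) / eps *
      \sum_(0 <= i < l) ((eps - 1) ^+ (l.+1 - i - 2) / eps ^+ (l.+1 - i + 1) * k i).
  rewrite big_distrr /=; apply: eq_big_nat => i /andP [_ lt_il].
  have -> : (l.+2 - i - 2 = (l.+1 - i - 2).+1)%N by lia.
  have -> : (l.+2 - i + 1 = (l.+1 - i + 1).+1)%N by lia.
  by rewrite !exprS; field; rewrite expf_neq0.
have -> : (l.+2 - l - 2 = 0)%N by lia.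
have -> : (l.+2 - l + 1 = 3)%N by lia.
by field.
Qed.

Lemma kprev_diff_alpha_coef (l : nat) :
  k l - kprev k l = - \sum_(i < l) alpha i - eps * alpha l.
Proof.
elim: l => [|l IH]; first by rewrite big_ord0 /alpha_coef /= big_geq //; field.
rewrite big_ord_recr /= alpha_coefS.
have -> : kprev k l = k l - (k l - kprev k l) by ring.
by rewrite IH; ring.
Qed.

Lemma hinge_sum_alpha_coef (l : nat) : hinge_sum eps alpha l = k l.
Proof.
elim: l => [|l IH].
  rewrite /hinge_sum big_ord1 -[k 0](subr0 _).
  by rewrite [k 0 - 0]kprev_diff_alpha_coef big_ord0 /=; ring.
rewrite hinge_sumS IH -[k l.+1](subrK (kprev k l.+1)) kprev_diff_alpha_coef /=.
by rewrite big_ord_recr /=; ring.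
Qed.

Lemma hinge_sum_inj (n : nat) (a b : nat -> R) :
    (forall l, (l <= n)%N -> hinge_sum eps a l = hinge_sum eps b l) ->
  forall l, (l <= n)%N -> a l = b l.
Proof.
move=> eq_ab l; elim/ltn_ind: l => l IH le_ln.
have := eq_ab l le_ln; rewrite /hinge_sum !big_ord_recr /=.
rewrite (eq_bigr (fun i : 'I_l => b i * ((i : nat)%:R - eps - l%:R))); last first.
  by move=> i _; rewrite IH // (leq_trans _ le_ln) // ltnW.
move/addrI/eqP; rewrite -subr_eq0 -mulrBl mulf_eq0 subr_eq0.
by rewrite addrAC subrr add0r oppr_eq0 (negbTE eps_neq0) orbF => /eqP.
Qed.

End ClosedForm.

Lemma min0_hinge (R : realFieldType) (eps : R) (i l : nat) :
    0 <= eps -> eps <= 1 ->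
  Num.min 0 (i%:R - eps - l%:R) = if (i <= l)%N then i%:R - eps - l%:R else 0.
Proof.
move=> eps_ge0 eps_le1; case: (leqP i l) => [le_il | lt_li].
  have : (i%:R <= l%:R :> R) by rewrite ler_nat.
  by move=> ?; rewrite min_r //; lra.
have : (l.+1%:R <= i%:R :> R) by rewrite ler_nat.
by rewrite -natr1 => ?; rewrite min_l //; lra.
Qed.

Lemma hinge_representation (R : realFieldType) (eps : R) (n : nat)
    (alpha : {ffun 'I_n.+1 -> R}) (l : nat) :
    0 <= eps -> eps <= 1 -> (l <= n)%N ->
  \sum_(i < n.+1) alpha i * Num.min 0 ((i : nat)%:R - eps - l%:R)
  = hinge_sum eps (fun i => alpha (inord i)) l.
Proof.
move=> eps_ge0 eps_le1 le_ln; rewrite /hinge_sum.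
rewrite (big_ord_widen n.+1 (fun i => alpha (inord i) * ((i : nat)%:R - eps - l%:R))) //.
rewrite [in RHS]big_mkcond /=; apply: eq_bigr => i _.
by rewrite inord_val min0_hinge // ltnS; case: (i <= l)%N; rewrite ?mulr0.
Qed.

Lemma hweight_le (n : nat) (x : {ffun 'I_n -> bool}) : (hweight x <= n)%N.
Proof.
rewrite /hweight -[X in (_ <= X)%N]card_ord -sum1_card.
by apply: leq_sum => i _; exact: leq_b1.
Qed.

Lemma hweight_prefix (n l : nat) :
  hweight [ffun r : 'I_n => (r < l)%N] = minn l n.
Proof.
rewrite /hweight (eq_bigr (fun r : 'I_n => ((r < l)%N : nat))); last first.
  by move=> r _; rewrite ffunE.
elim: n => [|n IH]; first by rewrite big_ord0; lia.
by rewrite big_ord_recr /= IH; case: (ltnP n l) => /= ?; lia.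
Qed.

Theorem theorem2 (R : realFieldType) (n : nat) (eps : R)
    (f : {ffun 'I_n -> bool} -> R) (k : nat -> R) :
  (1 <= n)%N -> 0 < eps -> eps <= 1 ->
  (forall x : {ffun 'I_n -> bool}, f x = k (hweight x)) ->
  (exists! alpha : {ffun 'I_n.+1 -> R}, represents eps f alpha) /\
  (forall alpha : {ffun 'I_n.+1 -> R}, represents eps f alpha ->
     forall j : 'I_n.+1, alpha j = alpha_coef eps k j).
Proof.
move=> _ eps_gt0 eps_le1 fE.
have eps_ge0 := ltW eps_gt0; have eps_neq0 := lt0r_neq0 eps_gt0.
have coefE alpha : represents eps f alpha -> forall j : 'I_n.+1, alpha j = alpha_coef eps k j.
  move=> rep j; rewrite -[j in alpha j]inord_val.
  apply: (@hinge_sum_inj _ _ eps_neq0 n (fun i => alpha (inord i))); last by rewrite -ltnS.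
  move=> l le_ln; rewrite hinge_sum_alpha_coef //.
  have wE : hweight [ffun r : 'I_n => (r < l)%N] = l by rewrite hweight_prefix; lia.
  by rewrite -hinge_representation // -wE -rep fE wE.
split=> //; exists [ffun j : 'I_n.+1 => alpha_coef eps k j]; split.
  move=> x; rewrite fE hinge_representation; [|done|done|exact: hweight_le].
  rewrite -{1}(@hinge_sum_alpha_coef _ _ k eps_neq0 (hweight x)).
  apply: eq_bigr => i _; rewrite ffunE inordK //.
  by apply: leq_trans (ltn_ord i) _; rewrite ltnS hweight_le.
by move=> beta /coefE betaE; apply/ffunP => j; rewrite ffunE betaE.
Qed.
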